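(* Let $\mathcal F\subseteq 2^{[n]}\setminus\{\emptyset\}$ be a hypergraph which is connected on $[n]$, and let $\widehat{\mathcal F}$ be its building closure. Then $\mathcal F$ is tight if and only if for every $X\in\widehat{\mathcal F}\setminus\{[n]\}$: (1) $\mathcal F_X$ is connected as a hypergraph on $X$, and (2) $\mathcal F^X$ is connected as a hypergraph on $[n]\setminus X$. Moreover condition (1) holds automatically for every $X\in\widehat{\mathcal F}$.
   Context: A building set on $[n]$ is a family $\mathcal B$ of nonempty subsets of $[n]$ containing all singletons and such that $I,J\in\mathcal B$, $I\cap J\neq\emptyset$ imply $I\cup J\in\mathcal B$. The building closure $\widehat{\mathcal F}$ of a hypergraph $\mathcal F$ is the unique minimal building set containing $\mathcal F$. For $X\subseteq[n]$: $\mathcal F_X=\{F\in\mathcal F:F\subseteq X\}$ and $\mathcal F^X=\{F\setminus X: F\in\mathcal F, F\setminus X\neq\emptyset\}$. A hypergraph $\mathcal H$ on a vertex set $S$ is connected if for any $x,y\in S$ there is a sequence $x=z_1,\dots,z_k=y$ in $S$ with each $\{z_i,z_{i+1}\}$ contained in some member of $\mathcal H$. For $F\subseteq[n]$ let $\Delta_F=\mathrm{Conv}\{e_i:i\in F\}$ and $\Delta_{\mathcal F}=\sum_{F\in\mathcal F}\Delta_F$ (Minkowski sum). Writing $\phi_X(x)=\sum_{i\in X}x_i$, one has (known result) $\Delta_{\mathcal F}=\{x\in\mathbb{R}^n:\phi_{[n]}(x)=|\mathcal F|,\ \phi_X(x)\ge|\mathcal F_X| \text{ for all } X\in\widehat{\mathcal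 F}\}$. $\mathcal F$ is called tight (an irredundant basis of $\widehat{\mathcal F}$) if every inequality $\phi_X(x)\ge|\mathcal F_X|$, $X\in\widehat{\mathcal F}\setminus\{[n]\}$, in this description is irredundant (facet-defining). *)

From HB Require Import structures.
From mathcomp Require Import all_boot all_order all_algebra.
Set Implicit Arguments. Unset Strict Implicit. Unset Printing Implicit Defensive.
Import Order.TTheory GRing.Theory Num.Theory.

Definition is_building (n : nat) (B : {set {set 'I_n}}) : bool :=
  [&& set0 \notin B,
      [forall i : 'I_n, [set i] \in B] &
      [forall I in B, forall J in B, (I :&: J != set0) ==> (I :|: J \in B)]].

Definition building_closure (n : nat) (FF : {set {set 'I_n}}) : {set {set 'I_n}} :=
  \bigcap_(B | is_building B && (FF \subset B)) B.

Definition restr (n : nat) (FF : {set {set 'I_n}}) (X : {set 'I_n}) : {set {set 'I_n}} :=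
  [set F in FF | F \subset X].

Definition contr (n : nat) (FF : {set {set 'I_n}}) (X : {set 'I_n}) : {set {set 'I_n}} :=
  [set F :\: X | F in [set F in FF | F :\: X != set0]].

Definition hconnected (n : nat) (H : {set {set 'I_n}}) (S : {set 'I_n}) : Prop :=
  forall x y, x \in S -> y \in S ->
    exists s : seq 'I_n,
      [/\ all (fun z => z \in S) s,
          path (fun a b => [exists E in H, (a \in E) && (b \in E)]) x s &
          last x s = y].

Local Open Scope ring_scope.

Definition phi (R : realFieldType) (n : nat) (X : {set 'I_n}) (x : 'I_n -> R) : R :=
  \sum_(i in X) x i.

(* Tightness: each inequality phi_X(x) >= |F_X|, X in closure \ {[n]}, of the
   description Delta_F = {phi_[n] = |F|, phi_Y >= |F_Y| (Y in closure)} is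
   irredundant: dropping it strictly enlarges the solution set, i.e. some x
   satisfies the equation and all the other inequalities but violates it. *)
Definition tight (R : realFieldType) (n : nat) (FF : {set {set 'I_n}}) : Prop :=
  forall X, X \in building_closure FF -> X != setT ->
    exists x : 'I_n -> R,
      [/\ phi setT x = #|FF|%:R,
          (forall Y, Y \in building_closure FF -> Y != X ->
             #|restr FF Y|%:R <= phi Y x) &
          phi X x < #|restr FF X|%:R].

From HB Require Import structures.
From mathcomp Require Import all_boot all_order all_algebra.
From mathcomp Require Import lra.
(* The members of the building closure are exactly the nonempty Y on which
   FF_Y is connected; this gives (1).  If F^X is disconnected, a component S of
   it splits [n] into X :|: S and ~: S, which both lie in the closure, meet in X
   and contain every edge between them; the equation and their two
   inequalities then add up to the inequality for X, which is thus redundant.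
   Conversely pick a outside X and b in X.  Choosing one vertex in each edge
   gives a vertex of Delta_FF; choosing outside X when possible makes the
   X-inequality an equality, and for Y <> X separating b from a the
   connectivity of F_X or F^X provides an edge leaving Y whose choice inside Y
   makes the Y-inequality strict.  The average of these vertices over all Y,
   moved by (e_a - e_b)/N, violates the X-inequality only. *)

Set Implicit Arguments. Unset Strict Implicit. Unset Printing Implicit Defensive.
Import Order.TTheory GRing.Theory Num.Theory.

Section Hypergraphs.
Variable n : nat.
Implicit Types (H FF B : {set {set 'I_n}}) (S X Y Z A E F I J : {set 'I_n}).

Definition hadj H : rel 'I_n := fun a b => [exists E in H, (a \in E) && (b \in E)].

Definition hedge H S : rel 'I_n := fun a b => [&& a \in S, b \in S & hadj H a b].

Definition hconnectedb H S := [forall x in S, forall y in S, connect (hedge H S) x y].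

Lemma hadj_sym H : symmetric (hadj H).
Proof.
by move=> a b; apply/exists_inP/exists_inP => -[E EH /andP[aE bE]]; exists E; rewrite ?aE ?bE.
Qed.

Lemma hedge_sym H S : symmetric (hedge H S).
Proof. by move=> a b; rewrite /hedge hadj_sym andbCA. Qed.

Lemma path_hedge H S x s : x \in S ->
  path (hedge H S) x s = all (fun z => z \in S) s && path (hadj H) x s.
Proof.
elim: s x => [|y s IH] x xS //=; rewrite /hedge xS /=.
by case yS: (y \in S); rewrite //= IH // andbCA.
Qed.

Lemma hconnectedP H S : reflect (hconnected H S) (hconnectedb H S).
Proof.
apply: (iffP forall_inP) => conn x.
- move=> y xS yS; have /forall_inP/(_ y yS)/connectP[s] := conn x xS.
  by rewrite path_hedge // => /andP[sS p] ->; exists s.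
- move=> xS; apply/forall_inP => y yS; have [s [sS p <-]] := conn x y xS yS.
  by apply/connectP; exists s; rewrite ?path_hedge ?sS.
Qed.

Lemma connect_hedge_sub H H' S S' : H \subset H' -> S \subset S' ->
  subrel (connect (hedge H S)) (connect (hedge H' S')).
Proof.
move=> sHH' sSS'; apply: connect_sub => x y /and3P[xS yS /exists_inP[E EH xyE]].
apply: connect1; rewrite /hedge !(subsetP sSS') //.
by apply/exists_inP; exists E; rewrite ?(subsetP sHH').
Qed.

Lemma path_cross (T : eqType) (e : rel T) (A : {pred T}) x s :
  path e x s -> x \in A -> last x s \notin A ->
  exists p q, [/\ e p q, p \in A & q \notin A].
Proof.
elim: s x => [|y s IH] x /=; first by move=> _ ->.
case/andP=> exy pys xA; case yA: (y \in A); first exact: IH.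
by exists x, y; rewrite yA.
Qed.

Lemma hconnected_cross H S Z x y : hconnected H S -> x \in S -> y \in S ->
  x \in Z -> y \notin Z -> exists E p q, [/\ E \in H, p \in E, q \in E, p \in Z & q \notin Z].
Proof.
move=> conn xS yS xZ yZ; have [s [_ pxs lxs]] := conn x y xS yS.
rewrite -lxs in yZ.
have [p [q [/exists_inP[E EH /andP[pE qE]] pZ qZ]]] := path_cross pxs xZ yZ.
by exists E, p, q.
Qed.

Lemma restrS H A A' : A \subset A' -> restr H A \subset restr H A'.
Proof.
move=> sAA'; apply/subsetP => F; rewrite !inE => /andP[-> sFA].
exact: subset_trans sFA sAA'.
Qed.

Lemma restrI H A A' : restr H (A :&: A') = restr H A :&: restr H A'.
Proof. by apply/setP => F; rewrite !inE subsetI andbACA andbb. Qed.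

Lemma hconnectedU H I J z : z \in I -> z \in J ->
  hconnected (restr H I) I -> hconnected (restr H J) J ->
  hconnected (restr H (I :|: J)) (I :|: J).
Proof.
move=> zI zJ /hconnectedP/forall_inP connI /hconnectedP/forall_inP connJ.
set e := hedge (restr H (I :|: J)) (I :|: J).
have from_z w : w \in I :|: J -> connect e z w.
  case/setUP=> [wI|wJ].
  - apply: connect_hedge_sub (forall_inP (connI z zI) w wI);
      [exact/restrS/subsetUl | exact: subsetUl].
  - apply: connect_hedge_sub (forall_inP (connJ z zJ) w wJ);
      [exact/restrS/subsetUr | exact: subsetUr].
apply/hconnectedP/forall_inP => x xIJ; apply/forall_inP => y yIJ.
apply: connect_trans (from_z y yIJ).
by rewrite (sym_connect_sym (@hedge_sym _ _)) from_z.
Qed.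

Lemma buildingP B : is_building B ->
  [/\ set0 \notin B, forall i, [set i] \in B &
      forall I J, I \in B -> J \in B -> I :&: J != set0 -> I :|: J \in B].
Proof.
case/and3P=> B0 /forallP B1 /forall_inP BU; split=> // I J IB JB.
by move/forall_inP: (BU I IB) => /(_ J JB)/implyP.
Qed.

Lemma building_closureP FF X :
  reflect (forall B, is_building B -> FF \subset B -> X \in B)
          (X \in building_closure FF).
Proof.
apply: (iffP bigcapP) => [XB B bB sFB | XB B /andP[]]; last exact: XB.
by apply: XB; rewrite bB.
Qed.

(* Glue the edge to a largest member of B between Z0 and Y. *)
Lemma building_grow FF B Z0 Y : is_building B -> FF \subset B ->
  Z0 \in B -> Z0 \subset Y ->
  (forall Z, Z \in B -> Z0 \subset Z -> Z \subset Y -> Z != Y ->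
     exists2 F, F \in FF & [&& F \subset Y, F :&: Z != set0 & ~~ (F \subset Z)]) ->
  Y \in B.
Proof.
move=> bB sFB Z0B sZ0Y grow; have [_ _ BU] := buildingP bB.
pose P Z := [&& Z \in B, Z0 \subset Z & Z \subset Y].
have PZ0 : P Z0 by rewrite /P Z0B subxx.
have [Z /and3P[ZB sZ0Z sZY] maxZ] := arg_maxnP (fun Z => #|Z|) PZ0.
have [<- //|ZY] := eqVneq Z Y.
have [F FF_F /and3P[sFY FZ nsFZ]] := grow Z ZB sZ0Z sZY ZY.
have ZFB : Z :|: F \in B by apply: BU => //; [exact: (subsetP sFB) | rewrite setIC].
have: P (Z :|: F) by rewrite /P ZFB subUset sZY sFY (subset_trans sZ0Z (subsetUl _ _)).
by move/maxZ; rewrite /= leqNgt proper_card // properUl.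
Qed.

Definition connected_sets FF := [set Y | (Y != set0) && hconnectedb (restr FF Y) Y].

Lemma connected_sets_building FF : is_building (connected_sets FF).
Proof.
apply/and3P; split; first by rewrite inE eqxx.
- apply/forallP => i; rewrite inE; apply/andP; split.
    by apply/set0Pn; exists i; rewrite inE.
  by apply/hconnectedP => x y /set1P-> /set1P->; exists [::].
- apply/forall_inP => I; rewrite inE => /andP[_ /hconnectedP connI].
  apply/forall_inP => J; rewrite inE => /andP[_ /hconnectedP connJ].
  apply/implyP => /set0Pn[z /setIP[zI zJ]]; rewrite inE.
  apply/andP; split; first by apply/set0Pn; exists z; rewrite inE zI.
  exact/hconnectedP/(hconnectedU zI zJ).
Qed.

Lemma sub_connected_sets FF : set0 \notin FF -> FF \subset connected_sets FF.
Proof.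
move=> FF0; apply/subsetP => F FF_F; rewrite inE.
apply/andP; split; first by apply: contraNneq FF0 => <-.
apply/hconnectedP => x y xF yF; exists [:: y]; rewrite /= yF; split=> //.
by rewrite andbT; apply/exists_inP; exists F; rewrite ?inE ?FF_F ?subxx ?xF ?yF.
Qed.

Lemma closure_connected FF X : set0 \notin FF -> X \in building_closure FF ->
  X != set0 /\ hconnected (restr FF X) X.
Proof.
move=> FF0 /building_closureP/(_ _ (connected_sets_building FF)).
by rewrite inE => /(_ (sub_connected_sets FF0))/andP[-> /hconnectedP].
Qed.

Lemma connected_closure FF Y : Y != set0 -> hconnected (restr FF Y) Y ->
  Y \in building_closure FF.
Proof.
case/set0Pn=> y0 y0Y conn; apply/building_closureP => B bB sFB.
have [_ B1 _] := buildingP bB.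
apply: (building_grow bB sFB (B1 y0)); first by rewrite sub1set.
move=> Z _ sy0Z sZY ZY.
have [y yY yZ] : exists2 y, y \in Y & y \notin Z.
  by apply/subsetPn; rewrite eqEsubset sZY in ZY.
have y0Z : y0 \in Z by rewrite -sub1set.
have [E [p [q [ER pE qE pZ qZ]]]] := hconnected_cross conn y0Y yY y0Z yZ.
move: ER; rewrite inE => /andP[EF sEY]; exists E => //.
rewrite sEY /=; apply/andP; split; first by apply/set0Pn; exists p; rewrite inE pE.
by apply: contra qZ => /subsetP; apply.
Qed.

Lemma saturated_closure FF X Y : set0 \notin FF -> hconnected FF setT ->
  X \in building_closure FF -> X \subset Y ->
  {in FF, forall F, (F :\: X) :&: Y != set0 -> F \subset Y} ->
  Y \in building_closure FF.
Proof.
move=> FF0 conn XC sXY satY; have [/set0Pn[x0 x0X] _] := closure_connected FF0 XC.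
apply/building_closureP => B bB sFB.
apply: (building_grow bB sFB) sXY _; first by move/building_closureP: XC; apply.
move=> Z _ sXZ sZY ZY.
have [y yY yZ] : exists2 y, y \in Y & y \notin Z.
  by apply/subsetPn; rewrite eqEsubset sZY in ZY.
have x0W : x0 \in Z :|: ~: Y by rewrite inE (subsetP sXZ).
have yW : y \notin Z :|: ~: Y by rewrite !inE yY orbF.
have [E [p [q [EF pE qE pW]]]] := hconnected_cross conn (in_setT x0) (in_setT y) x0W yW.
rewrite !inE negb_or negbK => /andP[qZ qY].
have sEY : E \subset Y.
  apply: satY => //; apply/set0Pn; exists q; rewrite !inE qE qY !andbT.
  by apply: contra qZ; apply: (subsetP sXZ).
exists E => //; rewrite sEY /=; apply/andP; split; last first.
  by apply: contra qZ => /subsetP; apply.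
by apply/set0Pn; exists p; move: pW; rewrite !inE pE (subsetP sEY) //= orbF.
Qed.

Lemma contr_disconnected_split FF X : ~ hconnected (contr FF X) (~: X) ->
  exists S, [/\ S \subset ~: X, S != set0, ~: X :\: S != set0 &
    {in FF, forall F, (F :\: X) :&: S != set0 -> F :\: X \subset S}].
Proof.
move/hconnectedP/forall_inPn=> [u uX /forall_inPn[v vX nuv]].
set e := hedge (contr FF X) (~: X).
exists [set w in ~: X | connect e u w]; split.
- by apply/subsetP => w; rewrite inE => /andP[].
- by apply/set0Pn; exists u; rewrite inE uX connect0.
- by apply/set0Pn; exists v; rewrite !inE -in_setC vX (negbTE nuv).
move=> F FF_F /set0Pn[w1]; rewrite !inE => /andP[/andP[w1X w1F] /andP[_ uw1]].
apply/subsetP => w2; rewrite !inE => /andP[w2X w2F]; rewrite w2X /=.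
apply: connect_trans uw1 (connect1 _); rewrite /e /hedge !inE w1X w2X /=.
apply/exists_inP; exists (F :\: X); last by rewrite !inE w1X w1F w2X w2F.
apply/imsetP; exists F => //; rewrite inE FF_F.
by apply/set0Pn; exists w1; rewrite inE w1X w1F.
Qed.

Lemma sum_nat_eq_in A c : \sum_(i in A) (c == i) = (c \in A).
Proof.
case cA: (c \in A); last by rewrite big1 // => i iA; case: eqP => // ci; rewrite ci iA in cA.
by rewrite (bigD1 c) //= eqxx big1 // => i /andP[_]; rewrite eq_sym => /negbTE->.
Qed.

Lemma card_restr FF Z : #|restr FF Z| = \sum_(F in FF) (F \subset Z).
Proof.
rewrite -sum1_card (big_mkcond (fun F => F \in restr FF Z)) [RHS]big_mkcond /=.
by apply: eq_bigr => F _; rewrite inE; case: (F \in FF); case: (F \subset Z).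
Qed.

Section SelectionCounts.
Variables (FF : {set {set 'I_n}}) (s : {set 'I_n} -> 'I_n).
Hypothesis s_in : {in FF, forall F, s F \in F}.

(* [phi Z] of the vertex [\sum_(F in FF) e_(s F)] of [Delta_FF]. *)
Definition sel_count Z := \sum_(F in FF) (s F \in Z).

Lemma sel_countT : sel_count setT = #|FF|.
Proof. by rewrite /sel_count -sum1_card; apply: eq_bigr => F _; rewrite inE. Qed.

Lemma sum_sel_count Z : \sum_(i in Z) sel_count [set i] = sel_count Z.
Proof.
rewrite /sel_count exchange_big /=; apply: eq_bigr => F _.
by rewrite -sum_nat_eq_in; apply: eq_bigr => i _; rewrite inE.
Qed.

Lemma leq_subset_sel (Z F : {set 'I_n}) : F \in FF -> (F \subset Z) <= (s F \in Z).
Proof. by move=> FF_F; case sFZ: (F \subset Z); rewrite // (subsetP sFZ) ?s_in. Qed.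

Lemma sel_count_ge Z : #|restr FF Z| <= sel_count Z.
Proof. by rewrite card_restr; apply: leq_sum => F; apply: leq_subset_sel. Qed.

Lemma sel_count_restr Z : {in FF, forall F, s F \in Z -> F \subset Z} ->
  sel_count Z = #|restr FF Z|.
Proof.
move=> sZ; rewrite card_restr; apply: eq_bigr => F FF_F.
case sFZ: (s F \in Z); first by rewrite (sZ F).
by case: (boolP (F \subset Z)) => // /subsetP/(_ _ (s_in FF_F)); rewrite sFZ.
Qed.

Lemma sel_count_gt Z F : F \in FF -> s F \in Z -> ~~ (F \subset Z) ->
  #|restr FF Z| < sel_count Z.
Proof.
move=> FF_F sFZ nsFZ; rewrite card_restr /sel_count (bigD1 F) //= [X in _ < X](bigD1 F) //=.
rewrite sFZ (negbTE nsFZ) add0n add1n ltnS.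
by apply: leq_sum => G /andP[FF_G _]; exact: leq_subset_sel.
Qed.

End SelectionCounts.

Section Inequalities.
Variable R : realFieldType.
Local Open Scope ring_scope.

Lemma phiUI A A' (x : 'I_n -> R) :
  phi (A :|: A') x + phi (A :&: A') x = phi A x + phi A' x.
Proof.
rewrite /phi (big_setID A' (A := A :|: A')) (big_setID A' (A := A)) /=.
rewrite [A :|: A']setUC setUK setDUl setDv set0U; lra.
Qed.

(* As every edge lies in A or A', [#|restr FF _|] is modular on A, A' like [phi]. *)
Lemma restr_modular_ineq FF A A' (x : 'I_n -> R) :
  A :|: A' = setT -> {in FF, forall F, (F \subset A) || (F \subset A')} ->
  phi setT x = #|FF|%:R -> #|restr FF A|%:R <= phi A x -> #|restr FF A'|%:R <= phi A' x ->
  #|restr FF (A :&: A')|%:R <= phi (A :&: A') x.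
Proof.
move=> AUA cover hT hA hA'.
have restrU : restr FF A :|: restr FF A' = FF.
  by apply/setP => F; rewrite !inE -andb_orr; apply/andb_idr/cover.
have := cardsUI (restr FF A) (restr FF A'); rewrite restrU -restrI.
move/(congr1 (fun k : nat => k%:R : R)); rewrite /= !natrD.
have := phiUI A A' x; rewrite AUA hT; lra.
Qed.

Lemma component_split_ineq FF X S (x : 'I_n -> R) :
  set0 \notin FF -> hconnected FF setT -> X \in building_closure FF ->
  S \subset ~: X -> S != set0 -> ~: X :\: S != set0 ->
  {in FF, forall F, (F :\: X) :&: S != set0 -> F :\: X \subset S} ->
  phi setT x = #|FF|%:R ->
  (forall Y, Y \in building_closure FF -> Y != X -> #|restr FF Y|%:R <= phi Y x) ->
  #|restr FF X|%:R <= phi X x.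
Proof.
move=> FF0 conn XC sSX S0 CS0 closedS hT hY.
have AIA : (X :|: S) :&: ~: S = X.
  by rewrite setIUl setICr setU0; apply/setIidPl; rewrite subsetC.
have AUA : (X :|: S) :|: ~: S = setT by rewrite -setUA setUCr setUT.
have sides F : F \in FF -> (F \subset X :|: S) || (F \subset ~: S).
  move=> FF_F; have [FS|/(closedS F FF_F) sFS] := eqVneq ((F :\: X) :&: S) set0.
  - apply/orP; right; apply/subsetP => w wF; rewrite inE; apply/negP => wS.
    have: w \in (F :\: X) :&: S by rewrite !inE wF wS -in_setC (subsetP sSX).
    by rewrite FS inE.
  - apply/orP; left; apply/subsetP => w wF; rewrite inE.
    by case wX: (w \in X); last by apply: (subsetP sFS); rewrite inE wX wF.
have AC : X :|: S \in building_closure FF.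
  apply: saturated_closure FF0 conn XC (subsetUl X S) _.
  move=> F FF_F /set0Pn[w]; rewrite !inE => /andP[/andP[wX wF]].
  rewrite (negbTE wX) /= => wS.
  by case/orP: (sides F FF_F) => // /subsetP/(_ w wF); rewrite inE wS.
have A'C : ~: S \in building_closure FF.
  have sXCS : X \subset ~: S by rewrite subsetC.
  apply: saturated_closure FF0 conn XC sXCS _.
  move=> F FF_F /set0Pn[w]; rewrite !inE => /andP[/andP[wX wF] wS].
  case/orP: (sides F FF_F) => // /subsetP/(_ w wF).
  by rewrite !inE (negbTE wX) (negbTE wS).
have AX : X :|: S != X.
  case/set0Pn: S0 => s sS; apply/eqP => /setP/(_ s); rewrite inE sS orbT.
  by move/(subsetP sSX): sS; rewrite inE => /negbTE->.
have A'X : ~: S != X.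
  case/set0Pn: CS0 => w; rewrite !inE => /andP[wS wX].
  by apply/eqP => /setP/(_ w); rewrite inE wS (negbTE wX).
by have := restr_modular_ineq AUA sides hT (hY _ AC AX) (hY _ A'C A'X); rewrite AIA.
Qed.

(* The average [t / N] of vertices of [Delta_FF] satisfies every inequality,
   strictly those separating [b] from [a]; moving it by [(e_a - e_b) / N]
   breaks only the inequality for [X]. *)
Lemma perturbed_point FF X a b (N : nat) (t : {set 'I_n} -> nat) :
  (0 < N)%N -> a \notin X -> b \in X ->
  (forall Z, \sum_(i in Z) t [set i] = t Z)%N ->
  t setT = (N * #|FF|)%N -> t X = (N * #|restr FF X|)%N ->
  (forall Z, N * #|restr FF Z| <= t Z)%N ->
  (forall Z, Z != X -> b \in Z -> a \notin Z -> N * #|restr FF Z| < t Z)%N ->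
  exists x : 'I_n -> R, [/\ phi setT x = #|FF|%:R,
    forall Y, Y != X -> #|restr FF Y|%:R <= phi Y x & phi X x < #|restr FF X|%:R].
Proof.
move=> N0 aX bX tadd tT tX t_ge t_gt.
pose x i := ((t [set i])%:R + (a == i)%:R - (b == i)%:R) / N%:R : R.
have phix Z : phi Z x = ((t Z)%:R + (a \in Z)%:R - (b \in Z)%:R) / N%:R.
  by rewrite /phi -mulr_suml sumrB big_split /= -!natr_sum tadd !sum_nat_eq_in.
have N0R : (0 : R) < N%:R by rewrite ltr0n.
exists x; split.
- by rewrite phix tT !inE addrK natrM mulrAC divff ?mul1r // gt_eqF.
- move=> Y YX; rewrite phix ler_pdivlMr //.
  case: (boolP ((b \in Y) && (a \notin Y))) => [/andP[bY aY]|].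
    by have := t_gt Y YX bY aY; rewrite -(ler_nat R) -nat1r natrM (negbTE aY) bY /=; lra.
  have := t_ge Y; rewrite -(ler_nat R) natrM.
  by case: (a \in Y); case: (b \in Y) => //= ? _; lra.
- by rewrite phix ltr_pdivrMr // tX (negbTE aX) bX natrM /= addr0 mulrC gtrBl ltr01.
Qed.

End Inequalities.

Section TightnessWitness.
Variables (FF : {set {set 'I_n}}) (X : {set 'I_n}) (a b : 'I_n).
Hypotheses (FF0 : set0 \notin FF) (aX : a \notin X) (bX : b \in X).
Hypotheses (connX : hconnected (restr FF X) X) (connCX : hconnected (contr FF X) (~: X)).

(* Choosing [p] in [F] makes the inequality for [Y] strict and keeps the one for [X] tight. *)
Definition witness Y F p :=
  [&& p \in F, p \in Y, ~~ (F \subset Y) & (p \in X) ==> (F \subset X)].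

(* [b] is only a default for the empty set. *)
Definition sel Y F : 'I_n :=
  if [pick p | witness Y F p] is Some p then p
  else if [pick p in F :\: X] is Some p then p else odflt b [pick p in F].

Lemma sel_in Y : {in FF, forall F, sel Y F \in F}.
Proof.
move=> F FF_F; rewrite /sel; case: pickP => [p /and4P[] //|_].
case: pickP => [p|_]; first by rewrite inE => /andP[].
case: pickP => [//|F0]; have F_0 : F = set0 by apply/setP => i; rewrite inE F0.
by move: FF0; rewrite -F_0 FF_F.
Qed.

Lemma sel_X Y F : sel Y F \in X -> F \subset X.
Proof.
rewrite /sel; case: pickP => [p /and4P[_ _ _ /implyP] //|_].
case: pickP => [p|noout]; first by rewrite inE => /andP[/negbTE->].
move=> _; apply/subsetP => p pF.
by move: (noout p); rewrite !inE pF andbT => /negbFE.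
Qed.

Lemma sel_witness Y F p : witness Y F p -> sel Y F \in Y.
Proof. by rewrite /sel; case: pickP => [q /and4P[] //|/(_ p)->]. Qed.

Lemma witness_exists Y : Y != X -> b \in Y -> a \notin Y ->
  exists2 F, F \in FF & exists p, witness Y F p.
Proof.
move=> YX bY aY; have [sXY|/subsetPn[c cX cY]] := boolP (X \subset Y).
- have [c cY cX] : exists2 c, c \in Y & c \notin X.
    by apply/subsetPn; apply: contra YX => sYX; rewrite eqEsubset sYX.
  have cCX : c \in ~: X by rewrite inE.
  have aCX : a \in ~: X by rewrite inE.
  have [_ [p [q [/imsetP[F] + -> pE qE pY qY]]]] := hconnected_cross connCX cCX aCX cY aY.
  rewrite inE => /andP[FF_F _]; move: pE qE; rewrite !inE => /andP[pX pF] /andP[_ qF].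
  exists F => //; exists p; rewrite /witness pF pY (negbTE pX) andbT /=.
  by apply/subsetPn; exists q.
- have [E [p [q [+ pE qE pY qY]]]] := hconnected_cross connX bX cX bY cY.
  rewrite inE => /andP[FF_E sEX]; exists E => //; exists p.
  by rewrite /witness pE pY sEX implybT andbT; apply/subsetPn; exists q.
Qed.

Definition vertex_sum Z := \sum_(Y : {set 'I_n}) sel_count FF (sel Y) Z.

Local Open Scope ring_scope.

Lemma tightness_witness (R : realFieldType) :
  exists x : 'I_n -> R, [/\ phi setT x = #|FF|%:R,
    forall Y, Y != X -> #|restr FF Y|%:R <= phi Y x & phi X x < #|restr FF X|%:R].
Proof.
apply: (@perturbed_point R FF X a b #|{: {set 'I_n}}| vertex_sum) => //.
- by apply/card_gt0P; exists set0.
- by move=> Z; rewrite exchange_big; apply: eq_bigr => Y _; apply: sum_sel_count.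
- by rewrite -sum_nat_const; apply: eq_bigr => Y _; apply: sel_countT.
- rewrite -sum_nat_const; apply: eq_bigr => Y _.
  by apply: (sel_count_restr (sel_in Y)) => F _ /sel_X.
- move=> Z; rewrite -sum_nat_const; apply: leq_sum => Y _.
  exact: sel_count_ge (sel_in Y) _.
- move=> Z ZX bZ aZ; have [F FF_F [p wit]] := witness_exists ZX bZ aZ.
  rewrite -sum_nat_const (bigD1 Z) //= [X in (_ < X)%N](bigD1 Z) //= -addSn.
  have nsFZ : ~~ (F \subset Z) by case/and4P: wit.
  apply: leq_add; first exact (sel_count_gt (sel_in Z) FF_F (sel_witness wit) nsFZ).
  by apply: leq_sum => Y _; exact: sel_count_ge (sel_in Y) _.
Qed.

End TightnessWitness.

End Hypergraphs.

Theorem mainTheorem8 (R : realFieldType) (n : nat) (FF : {set {set 'I_n}})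
  (Hne : set0 \notin FF) (Hconn : hconnected FF setT) :
  (tight R FF <->
     (forall X, X \in building_closure FF -> X != setT ->
        hconnected (restr FF X) X /\ hconnected (contr FF X) (~: X)))
  /\ (forall X, X \in building_closure FF -> hconnected (restr FF X) X).
Proof.
have connX X : X \in building_closure FF -> hconnected (restr FF X) X.
  by case/(closure_connected Hne).
split=> //; split=> [tightFF X XC XT | conn X XC XT].
- split; first exact: connX.
  case: (hconnectedP (contr FF X) (~: X)) => // disconn.
  have [S [sSX S0 CS0 closedS]] := contr_disconnected_split disconn.
  have [x [xT x_ge x_lt]] := tightFF X XC XT.
  have := component_split_ineq Hne Hconn XC sSX S0 CS0 closedS xT x_ge.
  by rewrite leNgt x_lt.
- have [/set0Pn[b bX] _] := closure_connected Hne XC.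
  have [a _ aX] : exists2 a, a \in setT & a \notin X by apply/subsetPn; rewrite subTset.
  have [cX cCX] := conn X XC XT.
  have [x [xT x_ge x_lt]] := tightness_witness Hne aX bX cX cCX R.
  by exists x; split=> // Y _; apply: x_ge.
Qed.
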